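(* Let $\mathcal{G}$ be a finite connected undirected simple graph with $N$ nodes which is not a tree, with degrees $d_1,\dots,d_N$, leading non-backtracking eigenvalue $\kappa>0$ and non-backtracking centralities $x_1,\dots,x_N$. Then the stationary distribution $\pi^{\mathrm B}=(\pi^{\mathrm B}_1,\dots,\pi^{\mathrm B}_N)$ of the NBCRW on $\mathcal{G}$ is $$\pi_i^{\mathrm B}=\left(\frac{\kappa^2-1}{\kappa}+\frac{d_i}{\kappa}\right)\frac{x_i^2}{Q},\qquad Q=\sum_{i=1}^N\left(\frac{\kappa^2-1}{\kappa}+\frac{d_i}{\kappa}\right)x_i^2 .$$
   Context: The non-backtracking matrix $\mathbf{B}$ of $\mathcal{G}$ is the $2E\times 2E$ matrix indexed by directed edges $i\to j$ (each undirected edge gives two directed edges), with $B_{i\to j,\,k\to l}=1$ if $j=k$ and $i\neq l$, and $0$ otherwise; $\kappa$ is its leading (Perron–Frobenius) eigenvalue and $v=(v_{i\to j})$ a corresponding eigenvector with non-negative entries. The non-backtracking centrality of node $i$ is $x_i=\sum_{j\in\mathcal{N}_i}v_{i\to j}$. The NBCRW on $\mathcal{G}$ (adjacency matrix $(a_{ij})$) is the Markov chain on the nodes with $p_{ij}=\dfrac{a_{ij}x_j}{\sum_{k}a_{ik}x_k}$ (assumed defined). A stationary distribution is a probability vector $\pi$ with $\pi\mathbf{P}=\pi$. *)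

From HB Require Import structures.
From mathcomp Require Import all_boot all_order all_algebra fingraph.
From mathcomp Require Import complex.
Set Implicit Arguments. Unset Strict Implicit. Unset Printing Implicit Defensive.
Import Order.TTheory GRing.Theory Num.Theory.
Local Open Scope ring_scope.

Definition simple_graph (T : finType) (g : rel T) : Prop :=
  symmetric g /\ irreflexive g.

Definition connected_graph (T : finType) (g : rel T) : Prop :=
  forall i j : T, connect g i j.

Definition has_cycle (T : finType) (g : rel T) : Prop :=
  exists s : seq T, [/\ (3 <= size s)%N, uniq s & cycle g s].

Definition is_tree (T : finType) (g : rel T) : Prop :=
  connected_graph g /\ ~ has_cycle g.

Definition dedge (T : finType) (g : rel T) := {p : T * T | g p.1 p.2}.

Definition nbm (R : rcfType) (T : finType) (g : rel T) (e f : dedge g) : R :=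
  (((sval e).2 == (sval f).1) && ((sval e).1 != (sval f).2))%:R.

Definition degree (T : finType) (g : rel T) (i : T) : nat := #|[set j | g i j]|.

Definition nb_centrality (R : rcfType) (T : finType) (g : rel T)
  (v : dedge g -> R) (i : T) : R :=
  \sum_(e : dedge g | (sval e).1 == i) v e.

Definition nbcrw (R : rcfType) (T : finType) (g : rel T) (x : T -> R) (i j : T) : R :=
  (g i j)%:R * x j / (\sum_k (g i k)%:R * x k).

Definition stationary (R : rcfType) (T : finType) (P : T -> T -> R) (p : T -> R) : Prop :=
  [/\ forall i, 0 <= p i, \sum_i p i = 1 & forall j, \sum_i p i * P i j = p j].

From HB Require Import structures.
From mathcomp Require Import all_boot all_order all_algebra fingraph.
From mathcomp Require Import complex.
From mathcomp Require Import ring.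
Import Order.TTheory GRing.Theory Num.Theory.
Set Implicit Arguments. Unset Strict Implicit. Unset Printing Implicit Defensive.
Local Open Scope ring_scope.

(* On an edge i -> j the eigen-equation reads kappa v_{i->j} = x_j - v_{j->i}.
   Summing over the neighbours j of i, once for each orientation, gives
   sum_{j ~ i} x_j = (kappa^2 - 1 + d_i) / kappa * x_i, so pi^B_i is proportional
   to x_i sum_{j ~ i} x_j.  The NBCRW satisfies detailed balance for this
   measure (both sides equal a_ij x_i x_j), hence it is stationary; for any
   stationary p the ratio p_i / (x_i sum_{j ~ i} x_j) has the mean-value property
   on the graph and is constant by the maximum principle. *)

Lemma connected_closed (T : finType) (g : rel T) (P : pred T) :
  symmetric g -> connected_graph g -> (forall a b, g a b -> P a -> P b) ->
  forall a, P a -> forall b, P b.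
Proof.
move=> sym conn clP a Pa b.
have clg : closed g P := intro_closed (sym_connect_sym sym) clP.
by rewrite -[P b]/(b \in P) -(closed_connect clg (conn a b)).
Qed.

Lemma harmonic_const (R : realDomainType) (T : finType) (g : rel T)
    (w : T -> T -> R) (f : T -> R) :
  symmetric g -> connected_graph g ->
  (forall a b, 0 <= w a b) -> (forall a b, g a b -> w a b != 0) ->
  (forall a, \sum_b w a b * f b = f a * \sum_b w a b) ->
  forall a b, f a = f b.
Proof.
move=> sym conn w_ge0 w_neq0 f_mean a b.
have [m _ f_max] := @arg_maxP _ _ T a xpredT f isT.
have max_closed c d : g c d -> f c == f m -> f d == f m.
  move=> gcd /eqP fcm.
  have gap0 : \sum_k w c k * (f c - f k) = 0.
    under eq_bigr => k _ do rewrite mulrBr.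
    by rewrite sumrB f_mean -mulr_suml mulrC subrr.
  have gap_ge0 k : xpredT k -> 0 <= w c k * (f c - f k).
    by move=> _; rewrite mulr_ge0 // subr_ge0 fcm; apply: f_max.
  have /(_ d isT)/eqP := psumr_eq0P gap_ge0 gap0.
  by rewrite mulf_eq0 (negbTE (w_neq0 _ _ gcd)) subr_eq0 fcm eq_sym.
have fm c : f c = f m.
  exact/eqP/(connected_closed sym conn max_closed (eqxx (f m))).
by rewrite !fm.
Qed.

Section DirectedEdges.
Variables (T : finType) (g : rel T).

Lemma sum_dedge (R : nmodType) (F : T -> T -> R) :
  \sum_(e : dedge g) F (sval e).1 (sval e).2 = \sum_a \sum_(b | g a b) F a b.
Proof.
rewrite pair_big_dep /= (reindex_omap (val : dedge g -> T * T) insub).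
  by apply: eq_bigl => -[p gp] /=; rewrite insubT /= eqxx andbT gp.
by move=> p gp; rewrite insubT.
Qed.

Definition dedge_fun (R : nmodType) (v : dedge g -> R) (i j : T) : R :=
  if insub (i, j) is Some e then v e else 0.

Lemma dedge_funE (R : nmodType) (v : dedge g -> R) (e : dedge g) :
  v e = dedge_fun v (sval e).1 (sval e).2.
Proof. by rewrite /dedge_fun -surjective_pairing valK. Qed.

Lemma dedge_fun_ge0 (R : numDomainType) (v : dedge g -> R) :
  (forall e, 0 <= v e) -> forall i j, 0 <= dedge_fun v i j.
Proof. by move=> v_ge0 i j; rewrite /dedge_fun; case: insub. Qed.

Lemma nb_centralityE (R : rcfType) (v : dedge g -> R) i :
  nb_centrality v i = \sum_(j | g i j) dedge_fun v i j.
Proof.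
pose F a b := if a == i then dedge_fun v a b else 0.
rewrite /nb_centrality big_mkcond (eq_bigr (fun e => F (sval e).1 (sval e).2)) /=;
  last by move=> e _; rewrite /F -dedge_funE.
rewrite sum_dedge (bigD1 i) //= [X in _ + X]big1 ?addr0; last first.
  by move=> a /negbTE ai; rewrite big1 // => b _; rewrite /F ai.
by apply: eq_bigr => j _; rewrite /F eqxx.
Qed.

End DirectedEdges.

Section NonBacktrackingEigenvector.
Variables (R : rcfType) (T : finType) (g : rel T) (kappa : R) (v : dedge g -> R).
Hypothesis sym : symmetric g.
Hypothesis v_eigen : forall e, \sum_f nbm R e f * v f = kappa * v e.
Hypothesis kappa_neq0 : kappa != 0.

Local Notation x := (nb_centrality v).
Local Notation V := (dedge_fun v).

Lemma nbm_eigen_pair i j : g i j -> kappa * V i j = x j - V j i.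
Proof.
move=> gij; have gji : g j i by rewrite sym.
have := v_eigen (exist _ (i, j) gij); rewrite dedge_funE /= => <-.
pose F a b := ((j == a) && (i != b))%:R * V a b.
rewrite (eq_bigr (fun f => F (sval f).1 (sval f).2)) => [|f _]; last first.
  by rewrite /F -dedge_funE.
rewrite sum_dedge (bigD1 j) //= [X in _ + X]big1 ?addr0; last first.
  by move=> a aj; rewrite big1 // => b _; rewrite /F eq_sym (negbTE aj) mul0r.
rewrite nb_centralityE (bigD1 i) //= [in RHS](bigD1 i) //= /F !eqxx mul0r add0r.
rewrite addrAC subrr add0r; apply: eq_bigr => b /andP[_ bi].
by rewrite eq_sym bi mul1r.
Qed.

Lemma sum_adj_nb_centrality i :
  \sum_(j | g i j) x j = (kappa ^+ 2 - 1 + (degree g i)%:R) / kappa * x i.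
Proof.
set y := \sum_(j | g i j) V j i.
have forward : \sum_(j | g i j) x j = kappa * x i + y.
  rewrite nb_centralityE mulr_sumr -big_split; apply: eq_bigr => j gij /=.
  by rewrite nbm_eigen_pair // subrK.
have backward : kappa * y + x i = (degree g i)%:R * x i.
  rewrite [X in _ + X]nb_centralityE mulr_sumr -big_split /=.
  rewrite (eq_bigr (fun _ => x i)); last first.
    by move=> j gij; rewrite nbm_eigen_pair ?subrK // sym.
  by rewrite sumr_const /degree -[[set j | g i j]]/[set j in g i] cardsE mulr_natl.
rewrite forward; apply: (mulfI kappa_neq0).
rewrite mulrA mulrCA divff // mulr1 mulrDr -(addrK (x i) (kappa * y)) backward.
ring.
Qed.

Lemma nb_centrality_gt0 :
  connected_graph g -> (forall e, 0 <= v e) -> (exists e, v e != 0) ->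
  forall i, 0 < x i.
Proof.
move=> conn v_ge0 [e0 ve0].
have V_ge0 := dedge_fun_ge0 v_ge0.
have x_ge0 i : 0 <= x i by rewrite nb_centralityE sumr_ge0.
have x_e0 : 0 < x (sval e0).1.
  rewrite /nb_centrality (bigD1 e0) //=; apply: (lt_le_trans (_ : 0 < v e0)).
    by rewrite lt_def ve0 v_ge0.
  by rewrite lerDl sumr_ge0.
have zero_closed a b : g a b -> x a == 0 -> x b == 0.
  move=> gab /eqP xa0.
  have Vab : V a b = 0.
    by move: xa0; rewrite nb_centralityE => /psumr_eq0P; apply.
  have Vba : V b a = 0.
    have gba : g b a by rewrite sym.
    move: (nbm_eigen_pair gba); rewrite xa0 Vab subrr.
    by move/eqP; rewrite mulf_eq0 (negbTE kappa_neq0) => /eqP.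
  by move: (nbm_eigen_pair gab); rewrite Vab Vba mulr0 subr0 => <-.
move=> i; rewrite lt_def x_ge0 andbT; apply/negP => xi0.
by move: x_e0; rewrite (eqP (connected_closed sym conn zero_closed xi0 _)) ltxx.
Qed.

End NonBacktrackingEigenvector.

Lemma eq_stationary (R : rcfType) (T : finType) (P : T -> T -> R) (p q : T -> R) :
  p =1 q -> stationary P p -> stationary P q.
Proof.
move=> pq [p_ge0 p_sum p_bal]; split=> [i|| j]; rewrite -?pq //.
- by rewrite -(eq_bigr _ (fun i _ => pq i)).
- by rewrite -p_bal; apply: eq_bigr => i _; rewrite pq.
Qed.

Section NBCRW.
Variables (R : rcfType) (T : finType) (g : rel T) (x : T -> R).
Hypothesis sym : symmetric g.
Hypothesis x_gt0 : forall i, 0 < x i.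

Definition wdegree i := \sum_k (g i k)%:R * x k.

Hypothesis wdegree_neq0 : forall i, wdegree i != 0.

Definition nbcrw_pi i := wdegree i * x i / \sum_j wdegree j * x j.

Lemma wdegreeE i : wdegree i = \sum_(k | g i k) x k.
Proof.
rewrite /wdegree [RHS]big_mkcond; apply: eq_bigr => k _.
by case: (g i k); rewrite ?mul1r ?mul0r.
Qed.

Lemma wdegree_gt0 i : 0 < wdegree i.
Proof. by rewrite lt_def wdegree_neq0 wdegreeE sumr_ge0 // => k _; apply: ltW. Qed.

Lemma nbcrw_detailed_balance i j :
  wdegree i * x i * nbcrw g x i j = (g j i)%:R * x i * x j.
Proof. by rewrite /nbcrw -/(wdegree i) sym; field. Qed.

Lemma mass_gt0 i : 0 < wdegree i * x i.
Proof. by rewrite mulr_gt0 ?wdegree_gt0. Qed.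

Lemma sum_mass_gt0 (i0 : T) : 0 < \sum_j wdegree j * x j.
Proof.
rewrite (bigD1 i0) //= ltr_pwDl ?mass_gt0 ?sumr_ge0 // => j _.
by rewrite ltW ?mass_gt0.
Qed.

Lemma nbcrw_pi_stationary (i0 : T) : stationary (nbcrw g x) nbcrw_pi.
Proof.
have Q_gt0 := sum_mass_gt0 i0.
split=> [i||j].
- by rewrite /nbcrw_pi divr_ge0 ?ltW ?mass_gt0.
- by rewrite /nbcrw_pi -mulr_suml divff ?gt_eqF.
rewrite /nbcrw_pi.
under eq_bigr => i _ do rewrite mulrAC nbcrw_detailed_balance.
by rewrite -!mulr_suml.
Qed.

Lemma nbcrw_stationary_unique p :
  connected_graph g -> stationary (nbcrw g x) p -> p =1 nbcrw_pi.
Proof.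
move=> conn [_ p_sum p_bal] i.
have x_neq0 a : x a != 0 by rewrite gt_eqF.
pose r a := p a / (wdegree a * x a).
have p_r a : p a = r a * (wdegree a * x a) by rewrite divfK ?gt_eqF ?mass_gt0.
have r_mean a : \sum_b (g a b)%:R * x b * r b = r a * \sum_b (g a b)%:R * x b.
  apply: (mulIf (x_neq0 a)); rewrite -mulrA -/(wdegree a) -p_r -p_bal mulr_suml.
  by apply: eq_bigr => b _; rewrite p_r -(mulrA (r b)) nbcrw_detailed_balance; ring.
have w_ge0 a b : 0 <= (g a b)%:R * x b := mulr_ge0 (ler0n _ _) (ltW (x_gt0 b)).
have w_neq0 a b : g a b -> (g a b)%:R * x b != 0 by move=> ->; rewrite mul1r.
have r_const a : r a = r i := harmonic_const sym conn w_ge0 w_neq0 r_mean a i.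
have rQ : r i * \sum_j wdegree j * x j = 1.
  by rewrite -p_sum mulr_sumr; apply: eq_bigr => a _; rewrite p_r r_const.
have Q_neq0 : \sum_j wdegree j * x j != 0 by rewrite gt_eqF ?(sum_mass_gt0 i).
rewrite /nbcrw_pi (p_r i) mulrC; apply: (mulIf Q_neq0).
by rewrite divfK // -mulrA rQ mulr1.
Qed.

End NBCRW.

Theorem theorem2 (R : rcfType) (T : finType) (g : rel T) (kappa : R)
    (v : dedge g -> R) :
  simple_graph g -> connected_graph g -> ~ is_tree g ->
  (* kappa is an eigenvalue of B with nonnegative (nonzero) eigenvector v *)
  (forall e, 0 <= v e) -> (exists e, v e != 0) ->
  (forall e, \sum_f nbm R e f * v f = kappa * v e) ->
  (* kappa is the leading eigenvalue: every (complex) eigenvalue has modulus <= kappa *)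
  (forall (lam : complex R) (w : dedge g -> complex R), (exists e, w e != 0) ->
     (forall e, \sum_f ((nbm R e f)%:C)%C * w f = lam * w e) -> `|lam| <= (kappa%:C)%C) ->
  0 < kappa ->
  (* the NBCRW is defined *)
  (forall i, \sum_k (g i k)%:R * nb_centrality v k != 0) ->
  let x := nb_centrality v in
  let Q := \sum_i ((kappa ^+ 2 - 1) / kappa + (degree g i)%:R / kappa) * x i ^+ 2 in
  let piB := fun i => ((kappa ^+ 2 - 1) / kappa + (degree g i)%:R / kappa) * x i ^+ 2 / Q in
  stationary (nbcrw g x) piB /\
  (forall p, stationary (nbcrw g x) p -> forall i, p i = piB i).
Proof.
move=> [sym _] conn _ v_ge0 v_nz v_eigen _ k_gt0 wdeg_neq0 x Q piB.
have k_neq0 : kappa != 0 by rewrite gt_eqF.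
have x_gt0 : forall i, 0 < x i := nb_centrality_gt0 sym v_eigen k_neq0 conn v_ge0 v_nz.
have mass i : ((kappa ^+ 2 - 1) / kappa + (degree g i)%:R / kappa) * x i ^+ 2
              = wdegree g x i * x i.
  by rewrite wdegreeE (sum_adj_nb_centrality sym v_eigen k_neq0) /x; field.
have piBE : nbcrw_pi g x =1 piB.
  by move=> i; rewrite /piB /Q mass (eq_bigr _ (fun j _ => mass j)).
have [[[i0 _] _] _] := v_nz.
split=> [|p p_stat i].
  exact: eq_stationary piBE (nbcrw_pi_stationary sym x_gt0 wdeg_neq0 i0).
by rewrite -piBE (nbcrw_stationary_unique sym x_gt0 wdeg_neq0 conn p_stat).
Qed.
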